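(* Let $\mathcal D$ be universal, $\mathrm M=(M,d)\in\mathfrak U_{\mathcal D}$, $A\subseteq M$ finite, and $\mathfrak p_0,\mathfrak p_1,\mathfrak p_2$ Katětov functions of $\mathrm M$ with domain $A$. Then $d_{\min}(\mathfrak p_1,\mathfrak p_2)\le d_{\min}(\mathfrak p_0,\mathfrak p_1)+d_{\min}(\mathfrak p_0,\mathfrak p_2)$.
   Context: $\mathcal D$ is a finite subset of $\mathbb R_{\ge0}$ containing $0$. $\mathfrak U_{\mathcal D}$ is the class of countable homogeneous metric spaces (every isometry between finite subspaces extends to an isometry of the space onto itself) with distance set exactly $\mathcal D$ into which every finite metric space with distances in $\mathcal D$ embeds isometrically; $\mathcal D$ is universal if this class is nonempty. A Katětov function of $\mathrm M$ is a map $\mathfrak t:F\to\mathcal D\setminus\{0\}$, $F\subseteq M$ finite, with $|\mathfrak t(x)-\mathfrak t(y)|\le d(x,y)\le\mathfrak t(x)+\mathfrak t(y)$ for all $x,y\in F$; $\operatorname{orb}(\mathfrak t)=\{y\in M\setminus F: d(y,x)=\mathfrak t(x)\ \forall x\in F\}$. $d_{\min}(\mathfrak s,\mathfrak t)=\min\{d(x,y):x\in\operatorname{orb}(\mathfrak s),y\in\operatorname{orb}(\mathfrak t)\}$. *)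

From Stdlib Require Import Reals List.
Import ListNotations.
Open Scope R_scope.

Definition distance_set (D : list R) : Prop :=
  In 0 D /\ forall r, In r D -> 0 <= r.

Definition is_metric {M : Type} (d : M -> M -> R) : Prop :=
  (forall x y, d x y = 0 <-> x = y) /\
  (forall x y, d x y = d y x) /\
  (forall x y z, d x z <= d x y + d y z).

Definition countable (M : Type) : Prop :=
  exists f : M -> nat, forall x y, f x = f y -> x = y.

(* Every isometry between finite subspaces (given by its finite graph [ps])
   extends to an isometry of M onto itself. *)
Definition homogeneous {M : Type} (d : M -> M -> R) : Prop :=
  forall ps : list (M * M),
    (forall p q, In p ps -> In q ps -> d (fst p) (fst q) = d (snd p) (snd q)) ->
    exists g : M -> M,
      (forall a b, d (g a) (g b) = d a b) /\
      (forall b, exists a, g a = b) /\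
      (forall p, In p ps -> g (fst p) = snd p).

Definition dist_set_is {M : Type} (d : M -> M -> R) (D : list R) : Prop :=
  (forall x y, In (d x y) D) /\ (forall r, In r D -> exists x y, d x y = r).

Definition finite_metric_D (D : list R) (n : nat) (e : nat -> nat -> R) : Prop :=
  (forall i j, (i < n)%nat -> (j < n)%nat -> (e i j = 0 <-> i = j)) /\
  (forall i j, (i < n)%nat -> (j < n)%nat -> e i j = e j i) /\
  (forall i j k, (i < n)%nat -> (j < n)%nat -> (k < n)%nat -> e i k <= e i j + e j k) /\
  (forall i j, (i < n)%nat -> (j < n)%nat -> In (e i j) D).

Definition D_universal_space {M : Type} (d : M -> M -> R) (D : list R) : Prop :=
  forall n e, finite_metric_D D n e ->
    exists f : nat -> M, forall i j, (i < n)%nat -> (j < n)%nat -> d (f i) (f j) = e i j.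

Definition in_U_D {M : Type} (d : M -> M -> R) (D : list R) : Prop :=
  is_metric d /\ countable M /\ homogeneous d /\ dist_set_is d D /\ D_universal_space d D.

Definition universal (D : list R) : Prop :=
  exists (M : Type) (d : M -> M -> R), in_U_D d D.

(* t, restricted to the finite domain A, is a Katetov function of (M,d) with values in D \ {0}. *)
Definition katetov {M : Type} (d : M -> M -> R) (D : list R) (A : list M) (t : M -> R) : Prop :=
  (forall x, In x A -> In (t x) D /\ t x <> 0) /\
  (forall x y, In x A -> In y A -> Rabs (t x - t y) <= d x y /\ d x y <= t x + t y).

Definition orb {M : Type} (d : M -> M -> R) (A : list M) (t : M -> R) (y : M) : Prop :=
  ~ In y A /\ forall x, In x A -> d y x = t x.

Definition is_dmin {M : Type} (d : M -> M -> R) (A : list M) (s t : M -> R) (r : R) : Prop :=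
  (exists x y, orb d A s x /\ orb d A t y /\ d x y = r) /\
  (forall x y, orb d A s x -> orb d A t y -> r <= d x y).

(* Homogeneity moves a point of orb(p0) realising d_min(p0,p2) onto one
   realising d_min(p0,p1) while fixing A; it carries the partner point of
   orb(p2) to another point of orb(p2), whose distance to the point of orb(p1)
   is then bounded by the triangle inequality. *)
From Stdlib Require Import Reals List Lra.
Open Scope R_scope.

Section UltrahomogeneousOrbits.

Variables (M : Type) (d : M -> M -> R).
Hypothesis d_metric : is_metric d.

Definition isometry (g : M -> M) : Prop := forall a b, d (g a) (g b) = d a b.

Lemma dist_self (x : M) : d x x = 0.
Proof. now apply (proj1 d_metric). Qed.

Lemma isometry_inj (g : M -> M) : isometry g -> forall x y, g x = g y -> x = y.
Proof.
  intros Hg x y Exy; apply (proj1 d_metric).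
  now rewrite <- Hg, Exy, dist_self.
Qed.

Lemma isometry_fix_orb (A : list M) (t : M -> R) (g : M -> M) (y : M) :
  isometry g -> (forall a, In a A -> g a = a) ->
  orb d A t y -> orb d A t (g y).
Proof.
  intros Hg HA [HyA Hy]; split.
  - intros HgyA; apply HyA.
    rewrite (isometry_inj g Hg y (g y)); [exact HgyA |].
    now rewrite (HA _ HgyA).
  - intros a Ha; rewrite <- (HA a Ha) at 1; rewrite Hg; exact (Hy a Ha).
Qed.

Lemma homogeneous_move_fix (A : list M) (x y : M) :
  homogeneous d -> (forall a, In a A -> d y a = d x a) ->
  exists g, isometry g /\ g y = x /\ forall a, In a A -> g a = a.
Proof.
  intros Hhom Hxy.
  destruct (Hhom ((y, x) :: map (fun a => (a, a)) A)) as [g [Hg [_ Hgraph]]].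
  - assert (Hsym := proj1 (proj2 d_metric)).
    intros p q [<- | Hp] [<- | Hq]; simpl.
    + now rewrite !dist_self.
    + apply in_map_iff in Hq as [a [<- Ha]]; simpl; exact (Hxy a Ha).
    + apply in_map_iff in Hp as [a [<- Ha]]; simpl.
      rewrite (Hsym a y), (Hsym a x); exact (Hxy a Ha).
    + apply in_map_iff in Hp as [a [<- _]]; apply in_map_iff in Hq as [b [<- _]].
      reflexivity.
  - exists g; repeat split; [exact Hg | exact (Hgraph _ (or_introl eq_refl)) |].
    intros a Ha; exact (Hgraph (a, a) (or_intror (in_map _ _ _ Ha))).
Qed.

Lemma homogeneous_orb_dist_transfer (A : list M) (s t : M -> R) (x y z : M) :
  homogeneous d -> orb d A s x -> orb d A s y -> orb d A t z ->
  exists z', orb d A t z' /\ d x z' = d y z.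
Proof.
  intros Hhom [_ Hx] [_ Hy] Hz.
  destruct (homogeneous_move_fix A x y Hhom) as [g [Hg [Hgy HgA]]].
  - intros a Ha; now rewrite Hx, Hy.
  - exists (g z); split; [exact (isometry_fix_orb A t g z Hg HgA Hz) |].
    now rewrite <- Hgy, Hg.
Qed.

End UltrahomogeneousOrbits.

Theorem lemma6p1 (D : list R) (hD : distance_set D) (hU : universal D)
  (M : Type) (d : M -> M -> R) (hM : in_U_D d D) (A : list M)
  (p0 p1 p2 : M -> R)
  (k0 : katetov d D A p0) (k1 : katetov d D A p1) (k2 : katetov d D A p2)
  (r12 r01 r02 : R)
  (h12 : is_dmin d A p1 p2 r12) (h01 : is_dmin d A p0 p1 r01) (h02 : is_dmin d A p0 p2 r02) :
  r12 <= r01 + r02.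
Proof.
  destruct hM as [Hd [_ [Hhom _]]].
  pose proof Hd as [_ [Hsym Htri]].
  destruct h01 as [[x0 [x1 [Ox0 [Ox1 Ex]]]] _].
  destruct h02 as [[y0 [y2 [Oy0 [Oy2 Ey]]]] _].
  destruct (homogeneous_orb_dist_transfer M d Hd
              A p0 p2 x0 y0 y2 Hhom Ox0 Oy0 Oy2) as [z [Oz Ez]].
  assert (Hmin : r12 <= d x1 z) by exact (proj2 h12 x1 z Ox1 Oz).
  assert (Htri01 := Htri x1 x0 z).
  rewrite (Hsym x1 x0), Ex, Ez, Ey in Htri01.
  lra.
Qed.
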